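(* Let $A$ be a lattice generated by a finite set $X$ of join prime elements and satisfying Whitman's condition (W), let $B$ be a lattice with finite generating set $Y$, and let $g\colon A\to D$, $h\colon B\to D$ be epimorphisms onto a lattice $D$. Let $C=\{(a,b)\in A\times B: g(a)=h(b)\}$. Then for each finite subset $Z\subseteq C$ there exists $N\in\mathbb N$ such that for all $(a,b)$ in the sublattice $\langle Z\rangle$ generated by $Z$, all $k\in\mathbb N$ and all $w\in H_{X,k}$: if $a\ge w$ then $b\ge\beta_{h,k+N}(g(w))$ (where $\beta_{h,j}$ is computed with respect to $Y$).
   Context: Whitman's condition (W): for all finite $S,T$, if $\bigwedge S\le\bigvee T$ then some $s\in S$ has $s\le\bigvee T$ or some $t\in T$ has $\bigwedge S\le t$. An element $p$ is join prime if $p\le x\vee y$ implies $p\le x$ or $p\le y$. For a lattice with finite generating set $X$ and a subset $W$, let $W^\wedge:=\{\bigwedge U: U\subseteq W\text{ finite}\}$, $W^\vee:=\{\bigvee U: U\subseteq W\text{ finite}\}$ with conventions $\bigwedge\emptyset:=\bigvee X$, $\bigvee\emptyset:=\bigwedge X$; $G_{X,0}:=X$, $H_{X,k}:=G_{X,k}^\wedge$, $G_{X,k+1}:=H_{X,k}^\vee$. For the epimorphism $h\colon B\to D$ and $d\in D$: $\beta_{h,k}(d):=\bigwedge\{w\in H_{Y,k}: h(w)\ge d\}$. *)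

(* lattices are mathcomp's [latticeType d] (no top/bottom assumed). *)
From HB Require Import structures.
From mathcomp Require Import all_boot all_order.
Set Implicit Arguments. Unset Strict Implicit. Unset Printing Implicit Defensive.
Import Order.LTheory.
Local Open Scope order_scope.

Inductive gen_by (T : Type) (m j : T -> T -> T) (S : T -> Prop) : T -> Prop :=
  | gen_base x : S x -> gen_by m j S x
  | gen_meet x y : gen_by m j S x -> gen_by m j S y -> gen_by m j S (m x y)
  | gen_join x y : gen_by m j S x -> gen_by m j S y -> gen_by m j S (j x y).

Section LatticeDefs.
Context {d : Order.disp_t} (L : latticeType d).

Definition generates (X : seq L) : Prop :=
  forall a : L, gen_by Order.meet Order.join (fun x => x \in X) a.

Definition ne_meet (s : seq L) : option L :=
  if s is x :: s' then Some (foldr Order.meet x s') else None.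
Definition ne_join (s : seq L) : option L :=
  if s is x :: s' then Some (foldr Order.join x s') else None.

Definition whitman : Prop :=
  forall (s0 t0 : L) (S T : seq L),
    foldr Order.meet s0 S <= foldr Order.join t0 T ->
    (exists2 s, s \in s0 :: S & s <= foldr Order.join t0 T) \/
    (exists2 t, t \in t0 :: T & foldr Order.meet s0 S <= t).

Definition join_prime (p : L) : Prop :=
  forall x y : L, p <= x `|` y -> p <= x \/ p <= y.

(* Big meet / join with the conventions  /\ [::] := \/ X,  \/ [::] := /\ X. *)
Definition bmeet (X U : seq L) : option L :=
  if U is [::] then ne_join X else ne_meet U.
Definition bjoin (X U : seq L) : option L :=
  if U is [::] then ne_meet X else ne_join U.

End LatticeDefs.

(* All subsequences of a list: these represent all finite subsets of the
   finite set listed by the list. *)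
Fixpoint subseqs (T : Type) (s : seq T) : seq (seq T) :=
  match s with
  | [::] => [:: [::]]
  | x :: s' => let r := subseqs s' in [seq x :: t | t <- r] ++ r
  end.

Section Levels.
Context {d : Order.disp_t} (L : latticeType d) (X : seq L).

Definition meets_of (W : seq L) : seq L := pmap (bmeet X) (subseqs W).
Definition joins_of (W : seq L) : seq L := pmap (bjoin X) (subseqs W).

Fixpoint Gs (k : nat) : seq L :=
  if k is k'.+1 then joins_of (meets_of (Gs k')) else X.
Definition Hs (k : nat) : seq L := meets_of (Gs k).

End Levels.

Definition lattice_hom {d1 d2 : Order.disp_t} {L1 : latticeType d1}
  {L2 : latticeType d2} (f : L1 -> L2) : Prop :=
  (forall x y, f (x `&` y) = f x `&` f y) /\ (forall x y, f (x `|` y) = f x `|` f y).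
Definition epimorphism {d1 d2 : Order.disp_t} {L1 : latticeType d1}
  {L2 : latticeType d2} (f : L1 -> L2) : Prop :=
  lattice_hom f /\ forall y, exists x, f x = y.

Definition beta {dB dD : Order.disp_t} {B : latticeType dB} {D : latticeType dD}
  (Y : seq B) (h : B -> D) (k : nat) (dd : D) : option B :=
  bmeet Y [seq w <- Hs Y k | dd <= h w].

Definition pmeet {dA dB : Order.disp_t} {A : latticeType dA} {B : latticeType dB}
  (u v : A * B) : A * B := (u.1 `&` v.1, u.2 `&` v.2).
Definition pjoin {dA dB : Order.disp_t} {A : latticeType dA} {B : latticeType dB}
  (u v : A * B) : A * B := (u.1 `|` v.1, u.2 `|` v.2).
Definition sublat_gen {dA dB : Order.disp_t} {A : latticeType dA} {B : latticeType dB}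
  (Z : seq (A * B)) : A * B -> Prop :=
  gen_by pmeet pjoin (fun z => z \in Z).

(* Say that b in B covers w in A at level j when some c in H_{Y,j} satisfies
   g w <= h c and c <= b; then beta_{h,j}(g w) <= c <= b, so the theorem asks
   for an N such that, for (a, b) in <Z>, b covers every w in H_{X,k} below a
   at level k + N.  Fix M with all second coordinates of Z in H_{Y,M} (the
   levels exhaust B) and take N = M + 1.  The invariant is proved by
   induction on the generation of (a, b) in <Z>.  For a join (a1 v a2, b1 v b2) we induct on k: write
   w = /\ U with U in G_{X,k}; by (W) either w lies below a1 or a2 (outer
   induction hypotheses), or some s in U lies below a1 v a2, and then s is
   join prime (k = 0) or s = \/ V with V in H_{X,k-1}, each member of V being
   covered by the inner induction.  The empty meet \/ X is a join of join-prime
   generators, each covered already at level M. *)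
From HB Require Import structures.
From mathcomp Require Import all_boot all_order.
Set Implicit Arguments. Unset Strict Implicit. Unset Printing Implicit Defensive.
Import Order.LTheory.
Local Open Scope order_scope.

Lemma eq_by_lower {d} {P : porderType d} (a b : P) :
  (forall z, (z <= a) = (z <= b)) -> a = b.
Proof. by move=> H; apply/le_anti; rewrite -H lexx H lexx. Qed.

Lemma le_foldr_meetE {d} {L : latticeType d} (z x : L) (s : seq L) :
  (z <= foldr Order.meet x s) = all (fun y => z <= y) (x :: s).
Proof.
elim: s => [|y s IH] /=; first by rewrite andbT.
by rewrite lexI IH /= andbCA.
Qed.

Lemma foldr_meet_le {d} {L : latticeType d} (x y : L) (s : seq L) :
  y \in x :: s -> foldr Order.meet x s <= y.
Proof.
by move=> Hy; have := lexx (foldr Order.meet x s); rewrite le_foldr_meetE => /allP; apply.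
Qed.

Lemma foldr_join_ge {d} {L : latticeType d} (x y : L) (s : seq L) :
  y \in x :: s -> y <= foldr Order.join x s.
Proof. exact: (@foldr_meet_le _ L^d). Qed.

Lemma foldr_meet_cat {d} {L : latticeType d} (x1 x2 : L) (s1 s2 : seq L) :
  foldr Order.meet x1 (s1 ++ x2 :: s2) = foldr Order.meet x1 s1 `&` foldr Order.meet x2 s2.
Proof.
by apply: eq_by_lower => z; rewrite lexI !le_foldr_meetE /= all_cat /= !andbA.
Qed.

Lemma bmeet_eq {d} {L : latticeType d} (X s t : seq L) :
  s =i t -> bmeet X s = bmeet X t.
Proof.
case: s => [|x s]; case: t => [|y t] //= Est.
- by have := Est y; rewrite !inE eqxx.
- by have := Est x; rewrite !inE eqxx.
- by congr Some; apply: eq_by_lower => z; rewrite !le_foldr_meetE; apply: eq_all_r.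
Qed.

Lemma generates_dual {d} {L : latticeType d} (X : seq L) :
  generates X -> generates (X : seq L^d).
Proof.
move=> HX a; elim: (HX a) => {a} [a Ha | a b _ IHa _ IHb | a b _ IHa _ IHb].
- exact: gen_base.
- exact: (gen_join IHa IHb).
- exact: (gen_meet IHa IHb).
Qed.

Lemma le_join_generators {d} {L : latticeType d} (X : seq L) (t : L) :
  generates X -> ne_join X = Some t -> forall a, a <= t.
Proof.
case: X => [|x0 X] // HX [<-] a.
elim: (HX a) => {a} [a Ha | a b _ IHa _ IHb | a b _ IHa _ IHb].
- exact: foldr_join_ge.
- exact: le_trans (leIl _ _) IHa.
- by rewrite leUx IHa IHb.
Qed.

Lemma ge_meet_generators {d} {L : latticeType d} (X : seq L) (t : L) :
  generates X -> ne_meet X = Some t -> forall a, t <= a.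
Proof. by move=> /generates_dual; exact: (@le_join_generators _ L^d). Qed.

Lemma subseqs_sub {T : eqType} (W U : seq T) : U \in subseqs W -> {subset U <= W}.
Proof.
elim: W U => [|x W IH] U /=; first by rewrite inE => /eqP ->.
rewrite mem_cat => /orP [/mapP [t Ht ->] | HU] y.
  by rewrite !inE => /orP [-> // | /(IH _ Ht) ->]; rewrite orbT.
by move/(IH _ HU); rewrite inE => ->; rewrite orbT.
Qed.

Lemma filter_in_subseqs {T : eqType} (p : pred T) (W : seq T) : filter p W \in subseqs W.
Proof.
elim: W => [|x W IH] /=; first by rewrite inE.
by rewrite mem_cat; case: (p x); rewrite ?(map_f (cons x) IH) ?IH ?orbT.
Qed.

Lemma mem_meets_of {d} {L : latticeType d} (X W : seq L) (v : L) :
  v \in meets_of X W <-> exists2 U, {subset U <= W} & bmeet X U = Some v.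
Proof.
rewrite /meets_of mem_pmap; split.
  by case/mapP => U HU Hv; exists U => //; apply: subseqs_sub.
case=> U HU Hv; apply/mapP; exists [seq y <- W | y \in U]; first exact: filter_in_subseqs.
rewrite -Hv; apply: bmeet_eq => y; rewrite mem_filter.
by case Hy: (y \in U); rewrite ?andbF //= HU.
Qed.

Lemma mem_joins_of {d} {L : latticeType d} (X W : seq L) (v : L) :
  v \in joins_of X W <-> exists2 U, {subset U <= W} & bjoin X U = Some v.
Proof. exact: (@mem_meets_of _ L^d). Qed.

(* W^/\ contains W and is closed under binary meets (an empty meet is the
   top element, hence neutral); dually for W^\/. *)
Lemma sub_meets_of {d} {L : latticeType d} (X W : seq L) : {subset W <= meets_of X W}.
Proof.
by move=> v Hv; apply/mem_meets_of; exists [:: v] => // y; rewrite inE => /eqP ->.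
Qed.

Lemma sub_joins_of {d} {L : latticeType d} (X W : seq L) : {subset W <= joins_of X W}.
Proof. exact: (@sub_meets_of _ L^d). Qed.

Lemma meets_of_meet {d} {L : latticeType d} (X W : seq L) (u v : L) :
  generates X -> u \in meets_of X W -> v \in meets_of X W -> u `&` v \in meets_of X W.
Proof.
move=> HX /mem_meets_of [U1 HU1 Hu] /mem_meets_of [U2 HU2 Hv].
apply/mem_meets_of; exists (U1 ++ U2).
  by move=> y; rewrite mem_cat => /orP [/HU1 | /HU2].
case: U1 HU1 Hu => [|x1 s1] HU1 Hu.
  by rewrite /= Hv meet_r // (le_join_generators HX Hu).
case: U2 HU2 Hv => [|x2 s2] HU2 Hv.
  by rewrite cats0 Hu meet_l // (le_join_generators HX Hv).
by move: Hu Hv => /= [<-] [<-]; rewrite foldr_meet_cat.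
Qed.

Lemma joins_of_join {d} {L : latticeType d} (X W : seq L) (u v : L) :
  generates X -> u \in joins_of X W -> v \in joins_of X W -> u `|` v \in joins_of X W.
Proof. by move=> /generates_dual; exact: (@meets_of_meet _ L^d). Qed.

Section Levels.
Context {d : Order.disp_t} {L : latticeType d} (X : seq L).

Lemma Gs_sub_Hs (k : nat) : {subset Gs X k <= Hs X k}.
Proof. exact: sub_meets_of. Qed.

Lemma Hs_sub_Gs (k : nat) : {subset Hs X k <= Gs X k.+1}.
Proof. exact: sub_joins_of. Qed.

Lemma Hs_mono (m n : nat) : (m <= n)%N -> {subset Hs X m <= Hs X n}.
Proof.
elim: n => [|n IH]; first by rewrite leqn0 => /eqP ->.
rewrite leq_eqVlt => /orP [/eqP -> // | /IH sub_mn] v /sub_mn Hv.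
exact/Gs_sub_Hs/Hs_sub_Gs.
Qed.

Hypothesis HX : generates X.

Lemma Hs_meet (k : nat) (u v : L) : u \in Hs X k -> v \in Hs X k -> u `&` v \in Hs X k.
Proof. exact: meets_of_meet. Qed.

Lemma Gs_join (k : nat) (u v : L) :
  u \in Gs X k.+1 -> v \in Gs X k.+1 -> u `|` v \in Gs X k.+1.
Proof. exact: joins_of_join. Qed.

Lemma exists_level (a : L) : exists n, a \in Hs X n.
Proof.
elim: (HX a) => {a} [a Ha | a b _ [m Hm] _ [n Hn] | a b _ [m Hm] _ [n Hn]].
- by exists 0%N; apply: Gs_sub_Hs.
- exists (maxn m n); apply: Hs_meet.
  + exact: Hs_mono (leq_maxl m n) _ Hm.
  + exact: Hs_mono (leq_maxr m n) _ Hn.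
- exists (maxn m n).+1; apply/Gs_sub_Hs/Gs_join; apply: Hs_sub_Gs.
  + exact: Hs_mono (leq_maxl m n) _ Hm.
  + exact: Hs_mono (leq_maxr m n) _ Hn.
Qed.

Lemma exists_common_level (s : seq L) : exists M, {subset s <= Hs X M}.
Proof.
elim: s => [|b s [M HM]]; first by exists 0%N.
have [n Hn] := exists_level b.
exists (maxn n M) => y; rewrite inE => /orP [/eqP -> | /HM Hy].
- exact: Hs_mono (leq_maxl n M) _ Hn.
- exact: Hs_mono (leq_maxr n M) _ Hy.
Qed.

End Levels.

Lemma hom_mono {d1 d2} {L1 : latticeType d1} {L2 : latticeType d2} (f : L1 -> L2) :
  lattice_hom f -> {homo f : x y / x <= y}.
Proof. by case=> f_meet _ x y; rewrite !leEmeet => /eqP x_le_y; rewrite -f_meet x_le_y. Qed.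

Lemma whitman_le_join2 {d} {L : latticeType d} (s0 x y : L) (S : seq L) :
  whitman L -> foldr Order.meet s0 S <= x `|` y ->
  [\/ exists2 s, s \in s0 :: S & s <= x `|` y,
      foldr Order.meet s0 S <= x | foldr Order.meet s0 S <= y].
Proof.
move=> HW /(HW s0 y S [:: x]) [[s Hs Hsxy] | [t]]; first by apply: Or31; exists s.
by rewrite !inE => /orP [] /eqP -> ; [apply: Or33 | apply: Or32].
Qed.

Section Covering.
Context {dA dB dD : Order.disp_t} {A : latticeType dA} {B : latticeType dB}
  {D : latticeType dD} (Y : seq B) (g : A -> D) (h : B -> D).
Hypotheses (hom_g : lattice_hom g) (hom_h : lattice_hom h) (genY : generates Y).

Definition covered (j : nat) (w : A) (b : B) : Prop :=
  exists2 c, c \in Hs Y j & g w <= h c /\ c <= b.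

Lemma covered_weaken (i j : nat) (w w' : A) (b b' : B) :
  (i <= j)%N -> w' <= w -> b <= b' -> covered i w b -> covered j w' b'.
Proof.
move=> le_ij le_w le_b [c Hc [gw_hc c_b]]; exists c.
- exact: Hs_mono le_ij _ Hc.
- by split; [apply: le_trans (hom_mono hom_g le_w) gw_hc | apply: le_trans le_b].
Qed.

Lemma covered_meet (j : nat) (w : A) (b1 b2 : B) :
  covered j w b1 -> covered j w b2 -> covered j w (b1 `&` b2).
Proof.
move=> [c1 Hc1 [gw_hc1 c1_b1]] [c2 Hc2 [gw_hc2 c2_b2]]; exists (c1 `&` c2).
- exact: Hs_meet.
- by split; [rewrite hom_h.1 lexI gw_hc1 gw_hc2 | apply: leI2].
Qed.

(* A join of elements covered at level j is covered at level j+1, since the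
   join of their witnesses lies in G_{Y,j+1}. *)
Lemma covered_join (j : nat) (x : A) (s : seq A) (b : B) :
  (forall u, u \in x :: s -> covered j u b) -> covered j.+1 (foldr Order.join x s) b.
Proof.
move=> Hcov.
suff [c Hc Hgc] : exists2 c, c \in Gs Y j.+1 & g (foldr Order.join x s) <= h c /\ c <= b.
  by exists c => //; apply: Gs_sub_Hs.
elim: s Hcov => [|y s IH] Hcov /=.
  by have [c Hc Hgc] := Hcov x (mem_head _ _); exists c => //; apply: Hs_sub_Gs.
have [|c1 Hc1 [gy_hc1 c1_b]] := Hcov y; first by rewrite !inE eqxx orbT.
have [|c2 Hc2 [gs_hc2 c2_b]] := IH.
  by move=> u; rewrite inE => /orP [/eqP -> | Hu]; apply: Hcov; rewrite !inE ?eqxx ?Hu ?orbT.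
exists (c1 `|` c2).
- by apply: Gs_join => //; apply: Hs_sub_Gs.
- by split; [rewrite hom_g.2 hom_h.2; apply: leU2 | rewrite leUx c1_b c2_b].
Qed.

Lemma beta_le_of_covered (j : nat) (w : A) (b : B) :
  covered j w b -> exists2 bt, beta Y h j (g w) = Some bt & bt <= b.
Proof.
move=> [c Hc [gw_hc c_b]].
have : c \in [seq u <- Hs Y j | g w <= h u] by rewrite mem_filter gw_hc.
rewrite /beta; case: [seq u <- Hs Y j | g w <= h u] => [|c0 S] //= Hin.
by eexists; [reflexivity | apply: le_trans c_b; apply: foldr_meet_le].
Qed.

Section JoinStep.
Variable X : seq A.
Hypotheses (genX : generates X) (jpX : forall x, x \in X -> join_prime x)
  (whitmanA : whitman A).
Variables (N : nat) (a1 a2 : A) (b1 b2 : B).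
Hypothesis cover1 :
  forall k w, w \in Hs X k -> w <= a1 -> covered (k + N) w b1.
Hypothesis cover2 :
  forall k w, w \in Hs X k -> w <= a2 -> covered (k + N) w b2.
Hypothesis cover_top :
  forall t, ne_join X = Some t -> t <= a1 `|` a2 -> covered N t (b1 `|` b2).

Lemma covered_below_part (k : nat) (w : A) :
  w \in Hs X k -> w <= a1 \/ w <= a2 -> covered (k + N) w (b1 `|` b2).
Proof.
move=> Hw [/(cover1 Hw) | /(cover2 Hw)]; apply: covered_weaken => //.
- exact: leUl.
- exact: leUr.
Qed.

Lemma covered_join_of_meetands (k : nat) :
  (forall s w, s \in Gs X k -> w \in Hs X k -> w <= s -> s <= a1 `|` a2 ->
     covered (k + N) w (b1 `|` b2)) ->
  forall w, w \in Hs X k -> w <= a1 `|` a2 -> covered (k + N) w (b1 `|` b2).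
Proof.
move=> Hmeetand w Hw Hwa; have /mem_meets_of [[|s0 S] HU Hbw] := Hw.
  by apply: covered_weaken (cover_top Hbw Hwa) => //; apply: leq_addl.
move: Hbw Hw Hwa => /= [<-] Hw Hwa.
case: (whitman_le_join2 whitmanA Hwa) => [[s Hs Hsa] | Hw1 | Hw2].
- exact: Hmeetand (HU _ Hs) Hw (foldr_meet_le Hs) Hsa.
- exact: covered_below_part Hw (or_introl Hw1).
- exact: covered_below_part Hw (or_intror Hw2).
Qed.

Lemma covered_below_generator (s w : A) :
  s \in Gs X 0 -> w \in Hs X 0 -> w <= s -> s <= a1 `|` a2 ->
  covered N w (b1 `|` b2).
Proof.
move=> Hs Hw Hws /(jpX Hs) Hsa; apply: (covered_below_part (k := 0)) => //.
by case: Hsa => Hsa; [left | right]; apply: le_trans Hsa.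
Qed.

Lemma covered_below_join (k : nat) :
  (forall w, w \in Hs X k -> w <= a1 `|` a2 -> covered (k + N) w (b1 `|` b2)) ->
  forall s w, s \in Gs X k.+1 -> w \in Hs X k.+1 -> w <= s -> s <= a1 `|` a2 ->
    covered (k.+1 + N) w (b1 `|` b2).
Proof.
move=> IHk s w /mem_joins_of [[|v0 V] HV Hbs] Hw Hws Hsa.
  apply: covered_below_part => //; left.
  exact: le_trans Hws (ge_meet_generators genX Hbs a1).
move: Hbs Hws Hsa => /= [<-] Hws Hsa.
rewrite addSn; apply: (covered_weaken (leqnn _) Hws (lexx _)).
apply: covered_join => u Hu.
by apply: IHk; [apply: HV | apply: le_trans Hsa; apply: foldr_join_ge].
Qed.

Lemma covered_join_step (k : nat) (w : A) :
  w \in Hs X k -> w <= a1 `|` a2 -> covered (k + N) w (b1 `|` b2).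
Proof.
elim: k w => [|k IHk]; apply: covered_join_of_meetands.
- exact: covered_below_generator.
- exact: covered_below_join.
Qed.

End JoinStep.

Section Sublattice.
Variables (X : seq A) (Z : seq (A * B)) (M : nat).
Hypotheses (genX : generates X) (jpX : forall x, x \in X -> join_prime x)
  (whitmanA : whitman A).
Hypothesis Z_fibre : forall z, z \in Z -> g z.1 = h z.2.
Hypothesis Z_level : forall z, z \in Z -> z.2 \in Hs Y M.

Lemma covered_generator (z : A * B) (w : A) :
  z \in Z -> w <= z.1 -> covered M w z.2.
Proof.
move=> Hz Hwz; exists z.2; first exact: Z_level.
by rewrite -Z_fibre // (hom_mono hom_g Hwz).
Qed.

(* A join-prime element below the first coordinate is covered at level M:
   join-primality lets it follow one side of each join. *)
Lemma covered_join_prime (p : A * B) (x : A) :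
  sublat_gen Z p -> join_prime x -> x <= p.1 -> covered M x p.2.
Proof.
move=> Hp jpx; elim: Hp => {p} [p Hp | p q _ IHp _ IHq | p q _ IHp _ IHq] /=.
- exact: covered_generator.
- by rewrite lexI => /andP [/IHp Hp /IHq Hq]; apply: covered_meet.
- case/jpx => [/IHp | /IHq]; apply: covered_weaken => //.
  + exact: leUl.
  + exact: leUr.
Qed.

(* The top element \/ X is a join of join-prime generators. *)
Lemma covered_top (p : A * B) (t : A) :
  sublat_gen Z p -> ne_join X = Some t -> t <= p.1 -> covered M.+1 t p.2.
Proof.
case: X jpX => [|x0 X'] // jpX' Hp [<-] Htp; apply: covered_join => x Hx.
apply: covered_join_prime Hp (jpX' x Hx) _.
exact: le_trans (foldr_join_ge Hx) Htp.
Qed.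

Lemma covered_sublattice (p : A * B) :
  sublat_gen Z p ->
  forall k w, w \in Hs X k -> w <= p.1 -> covered (k + M.+1) w p.2.
Proof.
elim=> {p} [p Hp | p q _ IHp _ IHq | p q Hp IHp Hq IHq] k w Hw /=.
- move=> Hwp; apply: covered_weaken (covered_generator Hp Hwp) => //.
  by rewrite addnS leqW // leq_addl.
- by rewrite lexI => /andP [/(IHp k w Hw) Hp /(IHq k w Hw) Hq]; apply: covered_meet.
- apply: (covered_join_step genX jpX whitmanA IHp IHq) Hw.
  by move=> t; apply: (covered_top (p := pjoin p q)); apply: gen_join.
Qed.

End Sublattice.

End Covering.

Theorem mainTheorem12 (dA dB dD : Order.disp_t)
  (A : latticeType dA) (B : latticeType dB) (D : latticeType dD)
  (X : seq A) (Y : seq B) (g : A -> D) (h : B -> D) :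
  generates X -> (forall x, x \in X -> join_prime x) -> whitman A ->
  generates Y -> epimorphism g -> epimorphism h ->
  forall Z : seq (A * B), (forall z, z \in Z -> g z.1 = h z.2) ->
  exists N : nat, forall (a : A) (b : B), sublat_gen Z (a, b) ->
    forall (k : nat) (w : A), w \in Hs X k -> w <= a ->
      exists2 bt : B, beta Y h (k + N) (g w) = Some bt & bt <= b.
Proof.
move=> genX jpX whitmanA genY [hom_g _] [hom_h _] Z Z_fibre.
have [M Z_level] := exists_common_level genY (map snd Z).
exists M.+1 => a b Hab k w Hw Hwa.
apply: (beta_le_of_covered (g := g)).
apply: (covered_sublattice hom_g hom_h genY genX jpX whitmanA Z_fibre _ Hab Hw Hwa).
by move=> z Hz; apply/Z_level/map_f.
Qed.
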